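(* Let $s\in\mathbb{N}$ and let $X\subseteq\mathbb{C}(\mathbb{Z})$ be the space of sequences $x_t=q(t)$, $q$ a complex polynomial of degree at most $s-1$. For each $m\in\mathbb{N}$ let $\phi^{*,m}_+\in\mathbb{C}^+_m(\mathbb{Z})$ be a reproducing filter for $X$ of minimal $\ell_2$-norm among all reproducing filters for $X$ in $\mathbb{C}^+_m(\mathbb{Z})$. Then $$\lim_{m\to\infty}m\|\phi^{*,m}_+\|_2^2=s^2.$$
   Context: $\mathbb{C}(\mathbb{Z})$: two-sided complex sequences; $\mathbb{C}^+_m(\mathbb{Z})$: sequences with $x_t=0$ for $t\notin\{0,\dots,m\}$. Convolution $(u*v)_t=\sum_\tau u_\tau v_{t-\tau}$; $\phi$ is reproducing for $X$ if $\phi*x=x$ for all $x\in X$. $\|\cdot\|_2$ is the $\ell_2$-norm. *)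

From HB Require Import structures.
From mathcomp Require Import all_boot all_order all_algebra.
From mathcomp Require Import complex.
From mathcomp Require Import all_classical all_reals all_analysis.
Set Implicit Arguments. Unset Strict Implicit. Unset Printing Implicit Defensive.
Import Order.TTheory GRing.Theory Num.Theory.
Local Open Scope ring_scope.

Section Defs.
Variable R : rcfType.
Local Notation C := R[i].

Definition seqC := int -> C.

Definition in_Cplus (m : nat) (x : seqC) : Prop :=
  forall t : int, (t < 0 \/ m%:Z < t) -> x t = 0.

(* Convolution (phi * x)_t = sum_{tau in Z} phi_tau x_{t - tau}, for phi in
   C^+_m(Z): the sum reduces to tau = 0..m. *)
Definition convp (m : nat) (phi x : seqC) : seqC :=
  fun t => \sum_(tau < m.+1) phi (tau%:Z) * x (t - tau%:Z).

Definition polyseqZ (q : {poly C}) : seqC := fun t => q.[t%:~R].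

(* X = { t |-> q(t) : deg q <= s - 1 }  (size q <= s) *)
Definition in_polyX (s : nat) (x : seqC) : Prop :=
  exists q : {poly C}, (size q <= s)%N /\ x = polyseqZ q.

Definition reproducing (s m : nat) (phi : seqC) : Prop :=
  forall x, in_polyX s x -> convp m phi x = x.

Definition l2sq (m : nat) (phi : seqC) : R :=
  \sum_(t < m.+1) ((complex.Re (phi t%:Z)) ^+ 2 + (complex.Im (phi t%:Z)) ^+ 2).

Definition min_reproducing (s m : nat) (phi : seqC) : Prop :=
  [/\ in_Cplus m phi, reproducing s m phi &
      forall psi, in_Cplus m psi -> reproducing s m psi -> l2sq m phi <= l2sq m psi].
End Defs.

From HB Require Import structures.
From mathcomp Require Import all_boot all_order all_algebra.
From mathcomp Require Import complex.
From mathcomp Require Import all_classical all_reals all_analysis.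
From mathcomp Require Import zify ring lra.
Import Order.TTheory GRing.Theory Num.Theory.
Import numFieldNormedType.Exports.
Set Implicit Arguments. Unset Strict Implicit. Unset Printing Implicit Defensive.
Local Open Scope classical_set_scope.

(* The minimal filter is real and explicit:
     psi(tau) = sum_(j < s) w_j C(tau + j, j),
     w_j = (-1)^j C(s, j+1) C(s+j, j+1) / C(m+j+1, j+1).
   A Chu-Vandermonde computation gives sum_tau psi(tau) C(m - tau, n) = C(m, n)
   for n < s, so psi reproduces the polynomials of degree < s.  Since psi is
   itself such a polynomial in tau, every reproducing phi satisfies
   sum_tau Re(phi tau) psi(tau) = psi(0) = sum_tau psi(tau)^2, and expanding
   sum_tau (Re(phi tau) - psi(tau))^2 >= 0 gives ||phi||^2 >= psi(0) = sum_j w_j.  Finally w_0 = s^2 / (m+1) and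
   w_j = O(1/m^2) for j > 0, so m sum_j w_j tends to s^2. *)

Lemma sum_bin_mul_binB (j i m : nat) :
  \sum_(tau < m.+1) 'C(tau + j, j) * 'C(m - tau, i) = 'C(m + j.+1, i + j.+1).
Proof.
elim: m i => [|m IHm] i.
  rewrite big_ord1 binn mul1n sub0n add0n.
  by case: i => [|i]; rewrite ?binn // bin0n bin_small //; lia.
rewrite big_ord_recr /= subnn -[m.+1 + j.+1]/((m + j.+1).+1).
case: i => [|i].
  rewrite bin0 muln1 binS -(IHm 0) addSnnS.
  by congr (_ + _); apply: eq_bigr => tau _; rewrite !bin0.
rewrite bin0n muln0 addn0 -[i.+1 + j.+1]/((i + j.+1).+1) binS -(IHm i.+1) -IHm -big_split /=.
by apply: eq_bigr => tau _; rewrite subSn ?binS ?mulnDr // -ltnS.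
Qed.

Lemma ffactnD (n a b : nat) : n ^_ (a + b) = n ^_ a * (n - a) ^_ b.
Proof.
elim: b => [|b IHb]; first by rewrite addn0 ffactn0 muln1.
by rewrite addnS !ffactnSr IHb subnDA mulnA.
Qed.

Lemma trinomial_revision (n a b : nat) :
  'C(n, a + b) * 'C(a + b, a) = 'C(n, a) * 'C(n - a, b).
Proof.
apply/eqP; rewrite -(eqn_pmul2r (_ : 0 < a`! * b`!)) ?muln_gt0 ?fact_gt0 //.
have := bin_fact (leq_addr b a); rewrite addKn => fact_ab.
by rewrite -mulnA fact_ab mulnACA !bin_ffact ffactnD.
Qed.

Local Open Scope ring_scope.

Section FallingFactorial.
Variable R : comPzRingType.
Implicit Types (x y : R) (n k : nat).

Definition ffactr x n : R := \prod_(l < n) (x - l%:R).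

Lemma ffactr0 x : ffactr x 0 = 1.
Proof. exact: big_ord0. Qed.

Lemma ffactrS x n : ffactr x n.+1 = ffactr x n * (x - n%:R).
Proof. exact: big_ord_recr. Qed.

Lemma ffactr_nat n k : ffactr n%:R k = (n ^_ k)%:R.
Proof.
elim: k => [|k IHk]; first by rewrite ffactr0.
rewrite ffactrS IHk ffactnSr natrM.
by case: (leqP k n) => [/natrB-> | /ffact_small->]; rewrite ?mul0r.
Qed.

Lemma ffactrN_nat n k : ffactr (- n%:R) k.+1 = (-1) ^+ k.+1 * ((n + k) ^_ k.+1)%:R.
Proof.
elim: k => [|k IHk]; first by rewrite ffactrS ffactr0 addn0 ffactn1 subr0 mul1r mulN1r.
rewrite ffactrS IHk addnS ffactSS natrM -addnS natrD !exprS; ring.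
Qed.

Lemma ffactrD x y n :
  ffactr (x + y) n = \sum_(k < n.+1) 'C(n, k)%:R * ffactr x k * ffactr y (n - k).
Proof.
elim: n => [|n IHn]; first by rewrite big_ord1 /= !ffactr0 bin0 !mulr1.
pose t k := 'C(n, k)%:R * ffactr x k * ffactr y (n.+1 - k).
have split_factor (k : 'I_n.+1) :
    'C(n, k)%:R * ffactr x k * ffactr y (n - k) * (x + y - n%:R)
  = 'C(n, k)%:R * ffactr x k.+1 * ffactr y (n.+1 - k.+1) + t k.
  have le_kn : (k <= n)%N by rewrite -ltnS.
  by rewrite /t subSS !ffactrS (subSn le_kn) ffactrS (natrB _ le_kn); ring.
have shift_t : \sum_(k < n.+1) t k
    = ffactr y n.+1 + \sum_(k < n.+1) 'C(n, k.+1)%:R * ffactr x k.+1 * ffactr y (n.+1 - k.+1).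
  rewrite big_ord_recl [in RHS]big_ord_recr /= bin_small // !mul0r addr0.
  by rewrite /t bin0 ffactr0 subn0 !mul1r.
rewrite ffactrS IHn mulr_suml.
under eq_bigr do rewrite split_factor.
rewrite big_split /= shift_t [in RHS]big_ord_recl.
under [in RHS]eq_bigr do rewrite lift0 binS natrD !mulrDl.
by rewrite bin0 ffactr0 subn0 !mul1r big_split /=; ring.
Qed.
End FallingFactorial.

Section OptimalFilter.
Variable F : numFieldType.

Lemma natr_bin_neq0 k l : (l <= k)%N -> 'C(k, l)%:R != 0 :> F.
Proof. by move=> le_lk; rewrite pnatr_eq0 -lt0n bin_gt0. Qed.

Lemma sum_alt_bin_ratio (s i : nat) : (i < s)%N ->
  \sum_(j < s) (-1) ^+ j * ('C(s, j.+1) * 'C(s + j, j.+1))%N%:R / 'C(i + j.+1, j.+1)%:R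
  = 1 :> F.
Proof.
move=> lt_is.
set A : F := ((i + s) ^_ s)%N%:R.
have A_neq0 : A != 0 by rewrite pnatr_eq0 -lt0n ffact_gt0 leq_addl.
have term (j : 'I_s) :
    'C(s, j.+1)%:R * ffactr (- s%:R) j.+1 * ffactr (i + s)%N%:R (s - j.+1)
  = - (A * ((-1) ^+ j * ('C(s, j.+1) * 'C(s + j, j.+1))%N%:R / 'C(i + j.+1, j.+1)%:R)).
  have bin_neq0 := natr_bin_neq0 (leq_addl i j.+1).
  have split_ffact : ((i + s) ^_ s = (i + s) ^_ (s - j.+1) * (i + j.+1) ^_ j.+1)%N.
    have -> : (i + j.+1 = i + s - (s - j.+1))%N by have := ltn_ord j; lia.
    by rewrite -ffactnD subnK.
  by rewrite ffactrN_nat ffactr_nat /A split_ffact -!bin_ffact !natrM exprS; field.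
(* Vandermonde at x = -s, y = i + s: the left-hand side ffactr i s vanishes. *)
have sum_args : - s%:R + (i + s)%N%:R = i%:R :> F by rewrite natrD addrCA addNr addr0.
have := @ffactrD F (- s%:R) (i + s)%N%:R s.
rewrite sum_args ffactr_nat ffact_small // big_ord_recl.
under eq_bigr do rewrite lift0 term.
rewrite bin0 ffactr0 subn0 ffactr_nat !mul1r sumrN -mulr_sumr => /eqP.
by rewrite eq_sym subr_eq0 -/A -{1}[A]mulr1 (inj_eq (mulfI A_neq0)) eq_sym => /eqP.
Qed.

Variable s m : nat.

Definition opt_coef (j : nat) : F :=
  (-1) ^+ j * ('C(s, j.+1) * 'C(s + j, j.+1))%N%:R / 'C(m + j.+1, j.+1)%:R.

Definition opt_filter (tau : nat) : F := \sum_(j < s) opt_coef j * 'C(tau + j, j)%:R.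

Lemma sum_opt_filter_binB n : (n < s)%N ->
  \sum_(tau < m.+1) opt_filter tau * 'C(m - tau, n)%:R = 'C(m, n)%:R.
Proof.
move=> lt_ns; rewrite /opt_filter.
under eq_bigr do rewrite mulr_suml.
rewrite exchange_big /= -[RHS]mulr1 -[X in _ = _ * X](sum_alt_bin_ratio lt_ns) mulr_sumr.
apply: eq_bigr => j _.
under eq_bigr do rewrite -mulrA -natrM.
rewrite -mulr_sumr -natr_sum sum_bin_mul_binB.
have revision : ('C(m + j.+1, n + j.+1) * 'C(n + j.+1, j.+1)
                = 'C(m + j.+1, j.+1) * 'C(m, n))%N.
  by rewrite [(n + _)%N]addnC trinomial_revision addnK.
have C_neq0 := natr_bin_neq0 (leq_addl n j.+1).
have D_neq0 := natr_bin_neq0 (leq_addl m j.+1).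
have -> : 'C(m + j.+1, n + j.+1)%:R
          = 'C(m + j.+1, j.+1)%:R * 'C(m, n)%:R / 'C(n + j.+1, j.+1)%:R :> F.
  by rewrite -!natrM -revision natrM mulfK.
by rewrite /opt_coef natrM; field; rewrite C_neq0 D_neq0.
Qed.

Definition binB_poly n : {poly F} := \prod_(0 <= l < n) ('X - (m%:R - l%:R)%:P).

Lemma horner_binB_poly n tau : (tau <= m)%N ->
  (binB_poly n).[tau%:R] = (-1) ^+ n * (n`! * 'C(m - tau, n))%N%:R.
Proof.
move=> le_tau_m; rewrite horner_prod.
have factor l : tau%:R - (m%:R - l%:R) = -1 * ((m - tau)%N%:R - l%:R) :> F.
  by rewrite natrB //; ring.
under eq_bigr do rewrite hornerXsubC factor.
by rewrite big_split /= prodr_const_nat subn0 big_mkord mulnC bin_ffact -ffactr_nat.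
Qed.

Lemma size_binB_poly n : size (binB_poly n) = n.+1.
Proof. by rewrite size_prod_XsubC size_iota subn0. Qed.

Lemma coef_binB_poly n : (binB_poly n)`_n = 1.
Proof.
by have /monicP := monic_prod_XsubC (index_iota 0 n) predT (fun l => m%:R - l%:R : F);
  rewrite lead_coefE size_binB_poly.
Qed.

(* Peeling off leading coefficients reduces to the monic basis binB_poly n,
   n < s, on which reproduction is sum_opt_filter_binB. *)
Lemma opt_filter_reproduces (r : {poly F}) : (size r <= s)%N ->
  \sum_(tau < m.+1) opt_filter tau * r.[tau%:R] = r.[0].
Proof.
suff: forall n, (n <= s)%N -> forall r : {poly F}, (size r <= n)%N ->
  \sum_(tau < m.+1) opt_filter tau * r.[tau%:R] = r.[0] by apply.
elim=> [|n IHn] lt_ns {}r size_r.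
  move: size_r; rewrite size_poly_leq0 => /eqP->.
  by rewrite horner0 big1 // => tau _; rewrite horner0 mulr0.
have sum_binB : \sum_(tau < m.+1) opt_filter tau * (binB_poly n).[tau%:R] = (binB_poly n).[0].
  rewrite -[0]/(0%:R : F) horner_binB_poly // subn0 natrM -sum_opt_filter_binB // !mulr_sumr.
  apply: eq_bigr => tau _; rewrite (horner_binB_poly _ (ltn_ord tau)) natrM.
  by rewrite mulrCA; congr (_ * _); exact: mulrCA.
set c := r`_n; set r' := r - c *: binB_poly n.
have size_r' : (size r' <= n)%N.
  apply/leq_sizeP => k le_nk; rewrite coefB coefZ.
  move: le_nk; rewrite leq_eqVlt => /orP[/eqP<-|lt_nk].
    by rewrite coef_binB_poly mulr1 subrr.
  rewrite (leq_sizeP _ _ size_r) // (leq_sizeP _ _ (eq_leq (size_binB_poly n))) //.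
  by rewrite mulr0 subr0.
have -> : r = r' + c *: binB_poly n by rewrite subrK.
under eq_bigr do rewrite hornerD hornerZ mulrDr mulrCA.
by rewrite big_split /= (IHn (ltnW lt_ns) _ size_r') -mulr_sumr sum_binB hornerD hornerZ.
Qed.

Definition binD_poly j : {poly F} := \prod_(0 <= l < j) ('X - (l%:R - j%:R)%:P).

Lemma horner_binD_poly j tau : (binD_poly j).[tau%:R] = (j`! * 'C(tau + j, j))%N%:R.
Proof.
have factor l : tau%:R - (l%:R - j%:R) = (tau + j)%N%:R - l%:R :> F.
  by rewrite natrD; ring.
rewrite horner_prod; under eq_bigr do rewrite hornerXsubC factor.
by rewrite big_mkord mulnC bin_ffact -ffactr_nat.
Qed.

Lemma size_binD_poly j : size (binD_poly j) = j.+1.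
Proof. by rewrite size_prod_XsubC size_iota subn0. Qed.

Definition opt_filter_poly : {poly F} := \sum_(j < s) (opt_coef j / j`!%:R) *: binD_poly j.

Lemma horner_opt_filter_poly tau : opt_filter_poly.[tau%:R] = opt_filter tau.
Proof.
rewrite horner_sum; apply: eq_bigr => j _.
have fact_neq0 : j`!%:R != 0 :> F by rewrite pnatr_eq0 -lt0n fact_gt0.
by rewrite hornerZ horner_binD_poly natrM mulrA divfK.
Qed.

Lemma size_opt_filter_poly : (size opt_filter_poly <= s)%N.
Proof.
apply: (big_ind (fun p : {poly F} => size p <= s)%N); first by rewrite size_poly0.
  by move=> p q sp sq; apply: leq_trans (size_polyD p q) _; rewrite geq_max sp sq.
move=> j _; apply: leq_trans (size_scale_leq _ _) _.
by rewrite size_binD_poly.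
Qed.

Lemma opt_filter0 : opt_filter 0 = \sum_(j < s) opt_coef j.
Proof. by apply: eq_bigr => j _; rewrite add0n binn mulr1. Qed.

Lemma sum_opt_filter_sqr : \sum_(tau < m.+1) opt_filter tau ^+ 2 = opt_filter 0.
Proof.
rewrite -[opt_filter 0]horner_opt_filter_poly -opt_filter_reproduces ?size_opt_filter_poly //.
by apply: eq_bigr => tau _; rewrite horner_opt_filter_poly.
Qed.
End OptimalFilter.

Lemma rmorph_opt_filter (F K : numFieldType) (f : {rmorphism F -> K}) s m tau :
  f (opt_filter F s m tau) = opt_filter K s m tau.
Proof.
rewrite rmorph_sum; apply: eq_bigr => j _.
by rewrite rmorphM fmorph_div rmorphM rmorphXn rmorphN1 !rmorph_nat.
Qed.

Section ComplexFilters.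
Variable R : rcfType.
Local Notation C := R[i].
Variable s m : nat.

Definition opt_seq : seqC R := fun t =>
  if (0 <= t) && (t <= m%:Z) then opt_filter C s m `|t|%N else 0.

Lemma opt_seq_nat (tau : 'I_m.+1) : opt_seq tau%:Z = opt_filter C s m tau.
Proof. by rewrite /opt_seq lez_nat -ltnS ltn_ord. Qed.

Lemma opt_seq_Cplus : in_Cplus m opt_seq.
Proof.
move=> t [t_lt0|m_lt_t]; rewrite /opt_seq.
  by rewrite leNgt t_lt0.
by rewrite [t <= _]leNgt m_lt_t andbF.
Qed.

Lemma opt_seq_reproducing : reproducing s m opt_seq.
Proof.
move=> _ [q [size_q ->]]; apply: funext => t; rewrite /convp /polyseqZ.
set r := q \Po ((t%:~R)%:P - 'X).
have size_r : (size r <= s)%N by rewrite size_comp_poly2 // -opprB size_polyN size_XsubC.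
have shift (tau : 'I_m.+1) : q.[(t - tau%:Z)%:~R] = r.[tau%:R].
  by rewrite /r horner_comp !hornerE intrD intrN.
under eq_bigr do rewrite opt_seq_nat shift.
by rewrite opt_filter_reproduces // /r horner_comp !hornerE subr0.
Qed.

Lemma l2sq_opt_seq : l2sq m opt_seq = \sum_(tau < m.+1) opt_filter R s m tau ^+ 2.
Proof.
apply: eq_bigr => tau _.
by rewrite opt_seq_nat -(rmorph_opt_filter (real_complex R)) /= expr0n addr0.
Qed.

Lemma reproducing_dot_opt_filter (phi : seqC R) : reproducing s m phi ->
  \sum_(tau < m.+1) complex.Re (phi tau%:Z) * opt_filter R s m tau = opt_filter R s m 0.
Proof.
move=> phi_rep.
set q := opt_filter_poly C s m \Po (- 'X).
have size_q : (size q <= s)%N.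
  by rewrite size_comp_poly2 ?size_opt_filter_poly // size_polyN size_polyX.
have eval_q tau : q.[(0 - tau%:Z)%:~R] = ((opt_filter R s m tau)%:C)%C.
  rewrite /q horner_comp !hornerE intrN opprK -pmulrn.
  by rewrite horner_opt_filter_poly -(rmorph_opt_filter (real_complex R)).
have := congr1 (fun x => complex.Re (x 0)) (phi_rep _ (ex_intro _ q (conj size_q erefl))).
rewrite /convp /polyseqZ /= (raddf_sum (@complex.Re R : Rcomplex R -> R)).
have eval_q0 : q.[0%:~R] = ((opt_filter R s m 0)%:C)%C by exact: eval_q 0%N.
rewrite eval_q0 /= => <-; apply: eq_bigr => tau _.
rewrite eval_q.
by case: (phi tau) => a b /=; rewrite mulr0 subr0.
Qed.

Lemma min_reproducing_l2sq (phi : seqC R) : min_reproducing s m phi ->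
  l2sq m phi = \sum_(j < s) opt_coef R s m j.
Proof.
case=> _ phi_rep phi_min; rewrite -opt_filter0.
apply/eqP; rewrite eq_le; apply/andP; split.
  rewrite -sum_opt_filter_sqr -l2sq_opt_seq.
  exact: phi_min (opt_seq_Cplus) (opt_seq_reproducing).
pose a (tau : 'I_m.+1) := complex.Re (phi tau%:Z).
pose b (tau : 'I_m.+1) := opt_filter R s m tau.
have dot_ab : \sum_tau a tau * b tau = opt_filter R s m 0.
  exact: reproducing_dot_opt_filter.
have sum_b2 : \sum_tau b tau ^+ 2 = opt_filter R s m 0 by exact: sum_opt_filter_sqr.
have sum_a2_le : \sum_tau a tau ^+ 2 <= l2sq m phi.
  by apply: ler_sum => tau _; rewrite lerDl sqr_ge0.
have : 0 <= \sum_tau (a tau - b tau) ^+ 2 by apply: sumr_ge0 => tau _; apply: sqr_ge0.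
have -> : \sum_tau (a tau - b tau) ^+ 2
          = \sum_tau a tau ^+ 2 - 2 * \sum_tau a tau * b tau + \sum_tau b tau ^+ 2.
  by rewrite mulr_sumr -sumrB -big_split /=; apply: eq_bigr => tau _; ring.
by rewrite dot_ab sum_b2 => ?; lra.
Qed.

End ComplexFilters.

Lemma bin2_le_binD (m j : nat) : ('C(m.+2, 2) <= 'C(m + j.+2, j.+2))%N.
Proof.
have binC n k : 'C(n + k, k) = 'C(n + k, n) by rewrite -(bin_sub (leq_addl n k)) addnK.
by rewrite -addn2 binC [X in (_ <= X)%N]binC leq_bin2l // leq_add2l.
Qed.

Section Asymptotics.
Variable R : realFieldType.

Lemma opt_coef0 s m : opt_coef R s m 0 = (s ^ 2)%N%:R / m.+1%:R.
Proof. by rewrite /opt_coef expr0 mul1r !bin1 addn0 addn1 -mulnn. Qed.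

Lemma norm_opt_coefS_le s m j :
  m%:R * `|opt_coef R s m j.+1| <= ('C(s, j.+2) * 'C(s + j.+1, j.+2))%N%:R * 2 / m.+1%:R.
Proof.
have D_gt0 : 0 < 'C(m + j.+2, j.+2)%:R :> R by rewrite ltr0n bin_gt0 leq_addl.
rewrite /opt_coef -mulrA normrMsign ger0_norm ?divr_ge0 ?ler0n //.
rewrite mulrCA -[_ * 2 / _]mulrA ler_wpM2l ?ler0n //.
rewrite ler_pdivrMr // mulrAC ler_pdivlMr ?ltr0n // -!natrM ler_nat.
have diag : (m.+2 * m.+1 = 2 * 'C(m.+2, 2))%N by rewrite -(mul_bin_diag m.+2 1) bin1.
apply: leq_trans (leq_mul (leqW (leqnSn m)) (leqnn _)) _.
by rewrite diag leq_mul2l bin2_le_binD.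
Qed.

Lemma opt_coef_sum_rate s : exists K : R, forall m,
  `|(s ^ 2)%N%:R - m%:R * \sum_(j < s) opt_coef R s m j| <= K / m.+1%:R.
Proof.
case: s => [|n]; first by exists 0 => m; rewrite big_ord0 mulr0 subr0 normr0 mul0r.
pose c j : R := ('C(n.+1, j.+2) * 'C(n.+1 + j.+1, j.+2))%N%:R * 2.
exists ((n.+1 ^ 2)%N%:R + \sum_(j < n) c j) => m.
have m1_gt0 : 0 < m.+1%:R :> R by rewrite ltr0n.
set tail := \sum_(j < n) opt_coef R n.+1 m j.+1.
have -> : \sum_(j < n.+1) opt_coef R n.+1 m j = opt_coef R n.+1 m 0 + tail.
  by rewrite big_ord_recl.
have tail_le : `|m%:R * tail| <= \sum_(j < n) c j / m.+1%:R.
  rewrite mulr_sumr; apply: le_trans (ler_norm_sum _ _ _) _.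
  apply: ler_sum => j _; rewrite normrM ger0_norm ?ler0n //.
  exact: norm_opt_coefS_le.
rewrite opt_coef0; set S : R := (n.+1 ^ 2)%N%:R.
have -> : S - m%:R * (S / m.+1%:R + tail) = S / m.+1%:R - m%:R * tail.
  by rewrite -[m.+1%:R]natr1 in m1_gt0 *; field; rewrite gt_eqF.
apply: le_trans (ler_normB _ _) _.
rewrite ger0_norm ?divr_ge0 ?ler0n // mulrDl mulr_suml.
exact: lerD.
Qed.

End Asymptotics.

Lemma cvg_harmonic_rate (R : archiRealFieldType) (u : R ^nat) (l K : R) :
  (forall n, `|l - u n| <= K / n.+1%:R) -> u @ \oo --> l.
Proof.
move=> rate.
have K_harmonic : K * harmonic n @[n --> \oo] --> 0.
  by rewrite -(mulr0 K); apply: cvgM; [exact: cvg_cst | exact: cvg_harmonic].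
apply: (@squeeze_cvgr _ _ _ _ (fun n => l - K * harmonic n) (fun n => l + K * harmonic n)).
- by near=> n; rewrite -ler_distlC rate.
- by rewrite -[X in _ --> X]subr0; apply: cvgB => //; exact: cvg_cst.
- by rewrite -[X in _ --> X]addr0; apply: cvgD => //; exact: cvg_cst.
Unshelve. all: by end_near.
Qed.

Theorem proposition13 (R : realType) (s : nat) (phi : nat -> int -> R[i]) :
  (forall m : nat, (s <= m.+1)%N -> min_reproducing s m (phi m)) ->
  (fun m : nat => m%:R * l2sq m (phi m)) @ \oo --> ((s ^ 2)%N%:R : R).
Proof.
move=> phi_min.
have [K rate] := opt_coef_sum_rate R s.
apply: cvg_trans (cvg_harmonic_rate rate); apply: near_eq_cvg.
near=> m; rewrite (min_reproducing_l2sq (phi_min m _)) //.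
near: m; by exists s => // m /= /leqW.
Unshelve. all: by end_near.
Qed.
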